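(* Let $p\in\mathbb N$, let $U_j\ne0$, $j=1,2,\dots$, be given numbers, and let numbers $F_j$, $j\ge -p$, satisfy $F_{-p}=\dots=F_p=1$ and $$U_j=\frac{F_{j-p-1}F_{j+p}}{F_{j-1}F_j},\qquad j=1,2,\dots.$$ Then $$F_j=\prod_{i=1}^j U_i^{\lfloor\frac{j-i}{p}\rfloor-\lfloor\frac{j-i}{p+1}\rfloor},\qquad j=1,2,\dots.$$ *)

From HB Require Import structures.
From mathcomp Require Import all_boot all_order all_algebra.
Set Implicit Arguments. Unset Strict Implicit. Unset Printing Implicit Defensive.

From mathcomp Require Import all_boot all_order all_algebra.
From mathcomp Require Import zify ring.
Import Order.TTheory GRing.Theory Num.Theory.
Local Open Scope ring_scope.

(* Write F_j as a product of powers U_i^(e(j-i)). The recurrence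
   F_{j+p} F_{j-p-1} = U_j F_{j-1} F_j then asks for the exponent
   e(m) = floor(m/p) - floor(m/(p+1)), extended by 0 to m < 0, to satisfy
   e(m+p) + e(m-p-1) = [m = 0] + e(m-1) + e(m) for every integer m.
   The truncated quotient q_d(m) = floor(max(m,0)/d) obeys
   q_d(m+d) = q_d(m) + [m >= 0]; applying this twice with d = p and twice with
   d = p+1, all indicator terms cancel except [m >= 0] - [m >= 1] = [m = 0].
   Since e(m) = 0 for m < p, the initial values F_{-p} = ... = F_p = 1 fit,
   and induction on j concludes. *)

Definition pos_divz (m : int) (d : nat) : int :=
  if m is Posz n then (n %/ d)%N else 0.

Lemma pos_divzDd (m : int) (d : nat) :
  (0 < d)%N -> pos_divz (m + d%:Z) d = pos_divz m d + (0 <= m)%R%:R.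
Proof.
move=> d_gt0; case: m => [n | n] /=.
  by rewrite -PoszD divnDr ?dvdnn // divnn d_gt0 PoszD.
case: (ltnP n d) => [lt_nd | le_dn].
  rewrite (_ : Negz n + d%:Z = (d - n.+1)%N) /=; last by lia.
  by rewrite divn_small ?addr0 //; lia.
by rewrite (_ : Negz n + d%:Z = Negz (n - d)) //; lia.
Qed.

Definition gap_exp (p : nat) (m : int) : int := pos_divz m p - pos_divz m p.+1.

Lemma gap_exp_small (p : nat) (m : int) : m < p%:Z -> gap_exp p m = 0.
Proof.
case: m => [n | n] lt_mp; rewrite /gap_exp //=.
by rewrite !divn_small ?subrr //; lia.
Qed.

Lemma gap_exp_rec (p : nat) (m : int) : (0 < p)%N ->
  gap_exp p (m + p%:Z) + gap_exp p (m - p%:Z - 1)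
    = (m == 0)%R%:R + gap_exp p (m - 1) + gap_exp p m.
Proof.
move=> p_gt0; rewrite /gap_exp.
have divp := @pos_divzDd _ p p_gt0.
have divp1 := @pos_divzDd _ p.+1 (ltn0Sn p).
have a1 := divp m.
have a2 : pos_divz (m - 1) p = pos_divz (m - p%:Z - 1) p + (0 <= m - p%:Z - 1)%R%:R.
  by rewrite -divp; congr pos_divz; ring.
have b1 : pos_divz (m + p%:Z) p.+1 = pos_divz (m - 1) p.+1 + (0 <= m - 1)%R%:R.
  by rewrite -divp1; congr pos_divz; lia.
have b2 : pos_divz m p.+1 = pos_divz (m - p%:Z - 1) p.+1 + (0 <= m - p%:Z - 1)%R%:R.
  by rewrite -divp1; congr pos_divz; lia.
rewrite a1 a2 b1 b2; lia.
Qed.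

Section ProductFormula.

Variables (R : fieldType) (U : nat -> R) (N : nat).
Hypothesis U_neq0 : forall i, (1 <= i)%N -> U i != 0.

Definition uprod (e : nat -> int) : R := \prod_(1 <= i < N.+1) U i ^ e i.

Lemma eq_uprod (e1 e2 : nat -> int) :
  (forall i, (1 <= i)%N -> e1 i = e2 i) -> uprod e1 = uprod e2.
Proof.
by move=> e12; apply: eq_big_nat => i /andP[i_ge1 _]; rewrite e12.
Qed.

Lemma uprodD (e1 e2 : nat -> int) :
  uprod (fun i => e1 i + e2 i) = uprod e1 * uprod e2.
Proof.
rewrite /uprod -big_split; apply: eq_big_nat => i /andP[i_ge1 _].
by rewrite expfzDr // U_neq0.
Qed.

Lemma uprod_eq1 (e : nat -> int) :
  (forall i, (1 <= i)%N -> e i = 0) -> uprod e = 1.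
Proof.
by move=> e0; rewrite (@eq_uprod _ (fun=> 0)) // /uprod big1 // => i _.
Qed.

Lemma uprod_delta (j : nat) :
  (1 <= j <= N)%N -> uprod (fun i => (i == j)%:R) = U j.
Proof.
move=> j_range; rewrite /uprod (bigD1_seq j) ?iota_uniq ?mem_index_iota //=.
by rewrite eqxx expr1z big1 ?mulr1 // => i /negbTE->; rewrite expr0z.
Qed.

Lemma uprod_neq0 (e : nat -> int) : uprod e != 0.
Proof.
rewrite /uprod prodf_seq_neq0; apply/allP => i; rewrite mem_index_iota.
by case/andP=> i_ge1 _; rewrite expfz_neq0 ?U_neq0.
Qed.

Variables (p : nat) (F : int -> R).
Hypothesis p_gt0 : (0 < p)%N.
Hypothesis F_init : forall j : int, - (p%:Z) <= j <= p%:Z -> F j = 1.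
Hypothesis U_def : forall j : nat, (1 <= j)%N ->
  U j = F (j%:Z - p%:Z - 1) * F (j%:Z + p%:Z) / (F (j%:Z - 1) * F j%:Z).

Lemma F_rec (j : nat) : (1 <= j)%N ->
  F (j%:Z + p%:Z) * F (j%:Z - p%:Z - 1) = U j * (F (j%:Z - 1) * F j%:Z).
Proof.
move=> j_ge1; have Uj_neq0 := @U_neq0 j j_ge1; rewrite U_def // in Uj_neq0 *.
have FF_neq0 : F (j%:Z - 1) * F j%:Z != 0.
  by apply: contraNneq Uj_neq0 => ->; rewrite invr0 mulr0.
by rewrite divfK // mulrC.
Qed.

(* [gap_exp p (n - i)] vanishes for [i > n], so the fixed range [1, N] is harmless. *)
Lemma F_uprod (n : int) : - (p%:Z) <= n <= N%:Z ->
  F n = uprod (fun i => gap_exp p (n - i%:Z)).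
Proof.
move=> /andP[n_ge n_le].
have [k n_eq] : exists k : nat, n + p%:Z = k%:Z by exists (absz (n + p%:Z)); lia.
elim/ltn_ind: k n n_eq n_ge n_le => k IH n n_eq n_ge n_le.
have {}IH (m : int) :
    - (p%:Z) <= m < n -> F m = uprod (fun i => gap_exp p (m - i%:Z)).
  by case/andP=> m_ge m_lt; apply: (IH (absz (m + p%:Z))); lia.
have [n_le_p | n_gt_p] := lerP n p%:Z.
  rewrite F_init ?n_ge // uprod_eq1 // => i i_ge1.
  by apply: gap_exp_small; lia.
have [j n_def] : exists j : nat, n = j%:Z + p%:Z by exists (absz (n - p%:Z)); lia.
have j_ge1 : (1 <= j)%N by lia.
apply: (mulIf (uprod_neq0 (fun i => gap_exp p (j%:Z - p%:Z - 1 - i%:Z)))).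
rewrite -IH; last lia.
rewrite n_def F_rec // !IH; [|lia..].
rewrite -uprod_delta; last lia.
rewrite -!uprodD; apply: eq_uprod => i _.
have := @gap_exp_rec p (j%:Z - i%:Z) p_gt0; rewrite subr_eq0 eqz_nat eq_sym.
rewrite (_ : j%:Z - i%:Z + p%:Z = j%:Z + p%:Z - i%:Z); last by ring.
rewrite (_ : j%:Z - i%:Z - p%:Z - 1 = j%:Z - p%:Z - 1 - i%:Z); last by ring.
rewrite (_ : j%:Z - i%:Z - 1 = j%:Z - 1 - i%:Z); last by ring.
by move=> ->; rewrite addrA.
Qed.

End ProductFormula.

Theorem proposition5 (R : fieldType) (p : nat) (U : nat -> R) (F : int -> R) :
  (0 < p)%N ->
  (forall j : nat, (1 <= j)%N -> U j != 0) ->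
  (forall j : int, - (p%:Z) <= j <= p%:Z -> F j = 1) ->
  (forall j : nat, (1 <= j)%N ->
     U j = F (j%:Z - p%:Z - 1) * F (j%:Z + p%:Z) / (F (j%:Z - 1) * F j%:Z)) ->
  forall j : nat, (1 <= j)%N ->
    F j%:Z = \prod_(1 <= i < j.+1)
               U i ^ (((j - i) %/ p)%N%:Z - ((j - i) %/ p.+1)%N%:Z).
Proof.
move=> p_gt0 U_neq0 F_init U_def j j_ge1.
rewrite (@F_uprod R U j U_neq0 p F p_gt0 F_init U_def); last lia.
by apply: eq_big_nat => i /andP[_ i_le_j]; rewrite subzn.
Qed.
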